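(* For every $f\in V$, the operator $\mathscr L_f:V\to V$ is not a compact operator; that is, for every neighborhood $U$ of $0$ in $V$, the closure of $\mathscr L_f(U)$ is not compact.
   Context: Let $N\ge2$, $\mathbf A$ an $N\times N$ zero-one aperiodic matrix, $\Sigma_{\mathbf A}^+=\{\omega\in\{1,\dots,N\}^{\mathbb N\cup\{0\}}:\mathbf A(\omega_m\omega_{m+1})=1\ \forall m\}$ with shift $\sigma_{\mathbf A}$. $\mathrm{var}_m(\phi)=\sup\{|\phi(\omega)-\phi(\omega')|:\omega_k=\omega'_k,\ 0\le k\le m-1\}$; $V=\{\phi:\Sigma_{\mathbf A}^+\to\mathbb C:\mathrm{var}_m(\phi)^{1/m}\to0\}$ with the (Fréchet) topology generated by the norms $\|\phi\|_\theta=\|\phi\|_\infty+[\phi]_\theta$, $\theta\in(0,1)$, $[\phi]_\theta$ the Lipschitz constant w.r.t. $d_\theta(\omega,\omega')=\theta^{\min\{m:\omega_m\ne\omega'_m\}}$. $(\mathscr L_f\phi)(\omega)=\sum_{\sigma_{\mathbf A}\omega'=\omega}e^{f(\omega')}\phi(\omega')$. A continuous linear operator $T$ on a metrizable complete topological vector space is compact if the closure of $T(U)$ is compact for some neighborhood $U$ of zero. *)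

From Stdlib Require Import Reals List.
From Coquelicot Require Import Coquelicot.
From mathcomp Require Import ssreflect ssrfun ssrbool eqtype ssrnat seq fintype bigop.

Set Implicit Arguments.
Unset Strict Implicit.
Unset Printing Implicit Defensive.

Section Shift.
Variable N : nat.
Variable A : 'I_N -> 'I_N -> bool.  (* zero-one matrix: A i j = true <-> entry 1 *)

(* A is aperiodic: some power A^M (M >= 1) has all entries positive, i.e. for
   all i j there is an A-admissible path of length M from i to j. *)
Definition aperiodic : Prop :=
  exists M : nat, (1 <= M)%N /\
    forall i j : 'I_N, exists w : nat -> 'I_N,
      w 0%N = i /\ w M = j /\ forall k, (k < M)%N -> A (w k) (w k.+1).

Definition Sigma := { w : nat -> 'I_N | forall m, A (w m) (w m.+1) }.

Definition sq (w : Sigma) : nat -> 'I_N := proj1_sig w.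

Definition scons (i : 'I_N) (w : nat -> 'I_N) : nat -> 'I_N :=
  fun m => match m with 0 => i | S k => w k end.

Lemma scons_adm (i : 'I_N) (w : Sigma) :
  A i (sq w 0%N) = true -> forall m, A (scons i (sq w) m) (scons i (sq w) m.+1).
Proof. move=> h [|m] //=. exact: (proj2_sig w m). Qed.

Definition pre (i : 'I_N) (w : Sigma) : option Sigma :=
  match A i (sq w 0%N) as b return A i (sq w 0%N) = b -> option Sigma with
  | true => fun h => Some (exist _ (scons i (sq w)) (scons_adm h))
  | false => fun _ => None
  end erefl.

Definition cexp (z : C) : C :=
  (exp (fst z) * cos (snd z), exp (fst z) * sin (snd z))%R.

(* Ruelle transfer operator:
   (L_f phi)(w) = sum_{w' : shift w' = w} e^{f w'} phi w'
   the preimages of w being exactly the admissible i.w *)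
Definition transfer (f phi : Sigma -> C) (w : Sigma) : C :=
  \big[Cplus/RtoC 0]_(i < N)
     match pre i w with
     | Some w' => Cmult (cexp (f w')) (phi w')
     | None => RtoC 0
     end.

Definition var (m : nat) (phi : Sigma -> C) : Rbar :=
  Lub_Rbar (fun r => exists w w' : Sigma,
     (forall k, (k < m)%N -> sq w k = sq w' k) /\ r = Cmod (Cminus (phi w) (phi w'))).

(* phi in V  <->  var_m(phi)^{1/m} -> 0, i.e. for every eps > 0,
   eventually var_m(phi) < eps^m *)
Definition inV (phi : Sigma -> C) : Prop :=
  forall eps : R, (0 < eps)%R ->
    exists M : nat, forall m : nat, (M <= m)%N -> Rbar_lt (var m phi) (Rbar.Finite (pow eps m)).

Definition supnorm (phi : Sigma -> C) : Rbar :=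
  Lub_Rbar (fun r => exists w : Sigma, r = Cmod (phi w)).

(* n is min{m : w_m <> w'_m}, so that d_theta(w,w') = theta^n *)
Definition first_diff (w w' : Sigma) (n : nat) : Prop :=
  sq w n <> sq w' n /\ forall k, (k < n)%N -> sq w k = sq w' k.

Definition lipconst (theta : R) (phi : Sigma -> C) : Rbar :=
  Lub_Rbar (fun r => exists (w w' : Sigma) (n : nat),
     first_diff w w' n /\ r = (Cmod (Cminus (phi w) (phi w')) / pow theta n)%R).

Definition norm_theta (theta : R) (phi : Sigma -> C) : Rbar :=
  Rbar_plus (supnorm phi) (lipconst theta phi).

Definition fsub (phi psi : Sigma -> C) : Sigma -> C := fun w => Cminus (phi w) (psi w).

(* Neighbourhoods in the (Frechet) topology on V generated by the norms
   ||.||_theta, 0 < theta < 1: U subset of V containing a finite intersection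
   of balls {phi in V : ||phi - psi||_theta < eps}. *)
Definition nbhsV (psi : Sigma -> C) (U : (Sigma -> C) -> Prop) : Prop :=
  (forall phi, U phi -> inV phi) /\
  exists (thetas : list R) (eps : R), (0 < eps)%R /\
    (forall theta, In theta thetas -> (0 < theta < 1)%R) /\
    forall phi, inV phi ->
      (forall theta, In theta thetas -> Rbar_lt (norm_theta theta (fsub phi psi)) (Rbar.Finite eps)) ->
      U phi.

Definition openV (O : (Sigma -> C) -> Prop) : Prop :=
  (forall phi, O phi -> inV phi) /\ forall psi, O psi -> nbhsV psi O.

Definition closureV (S : (Sigma -> C) -> Prop) : (Sigma -> C) -> Prop :=
  fun psi => inV psi /\ forall U, nbhsV psi U -> exists phi, U phi /\ S phi.

Definition compactV (K : (Sigma -> C) -> Prop) : Prop :=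
  (forall phi, K phi -> inV phi) /\
  forall Cov : ((Sigma -> C) -> Prop) -> Prop,
    (forall O, Cov O -> openV O) ->
    (forall phi, K phi -> exists O, Cov O /\ O phi) ->
    exists l : list ((Sigma -> C) -> Prop),
      (forall O, In O l -> Cov O) /\ (forall phi, K phi -> exists O, In O l /\ O phi).

End Shift.

Definition image_of {X Y : Type} (T : X -> Y) (U : X -> Prop) : Y -> Prop :=
  fun y => exists x, U x /\ y = T x.

(* Let U be a basic neighbourhood of 0 in V, defined by finitely many norms
   ||.||_theta, and suppose the closure K of L_f(U) were compact.  Put
   t = min(1/2, thetas) and, for j : nat, let O_j be the set of g in V whose
   difference quotients |g w - g w'| / (t/2)^n, over pairs (w, w') first
   differing at depth n >= j, stay below some L < 1.  The O_j are open,
   increasing and cover V, so K lies in a single O_B.  On the other hand, for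
   the indicator phi of a cylinder [i0 u_0 ... u_m] with height delta t^(m+2),
   phi lies in U while L_f phi jumps by delta t^(m+2) e^(Re f(i0.u)) between
   points first differing at depth m; the corresponding quotient at scale t/2
   is of order 2^m, hence >= 1 for m large, contradicting K in O_B. *)

From Pilot Require Import Defs.
From Stdlib Require Import Reals List Lra Lia FunctionalExtensionality.
From Coquelicot Require Import Coquelicot.
From mathcomp Require Import ssreflect ssrfun ssrbool eqtype ssrnat seq fintype bigop.
From mathcomp Require Import zify.
From HB Require Import structures.
Open Scope R_scope.

Lemma lipschitz_of_deriv (g g' : R -> R) (K a b : R) :
  (forall c, derivable_pt_lim g c (g' c)) ->
  (forall c, Rmin a b <= c <= Rmax a b -> Rabs (g' c) <= K) ->
  Rabs (g b - g a) <= K * Rabs (b - a).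
Proof.
  move=> hd hK. have [c [-> hc]] := MVT_abs g g' a b (fun c _ => hd c).
  apply: Rmult_le_compat_r; [exact: Rabs_pos | exact: hK].
Qed.

Lemma sin_lip a b : Rabs (sin b - sin a) <= Rabs (b - a).
Proof.
  rewrite -[X in _ <= X]Rmult_1_l.
  apply: (lipschitz_of_deriv sin cos) => c; first exact: derivable_pt_lim_sin.
  move=> _; apply: Rabs_le; have := COS_bound c; lra.
Qed.

Lemma cos_lip a b : Rabs (cos b - cos a) <= Rabs (b - a).
Proof.
  rewrite -[X in _ <= X]Rmult_1_l.
  apply: (lipschitz_of_deriv cos (fun c => - sin c)) => c; first exact: derivable_pt_lim_cos.
  move=> _; apply: Rabs_le; have := SIN_bound c; lra.
Qed.

Lemma exp_mono a b : a <= b -> exp a <= exp b.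
Proof.
  case/Rle_lt_or_eq_dec => [h | ->]; [exact: Rlt_le (exp_increasing a b h) | exact: Rle_refl].
Qed.

(* Near a, exp is Lipschitz with constant 3 exp a (using exp 1 <= 3). *)
Lemma exp_lip a b : Rabs (b - a) <= 1 -> Rabs (exp b - exp a) <= 3 * exp a * Rabs (b - a).
Proof.
  move=> hab. apply: (lipschitz_of_deriv exp exp) => c; first exact: derivable_pt_lim_exp.
  move=> [_ hc]. rewrite Rabs_pos_eq; last exact: Rlt_le (exp_pos c).
  have hca : c <= a + 1.
  { apply: Rle_trans hc (Rmax_lub _ _ _ _ _); first lra.
    have := Rabs_le_between (b - a) 1; lra. }
  apply: Rle_trans (exp_mono _ _ hca) _.
  rewrite exp_plus Rmult_comm; apply: Rmult_le_compat_r; [exact: Rlt_le (exp_pos a) | exact: exp_le_3].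
Qed.

Lemma Cmod_le_sum (z : C) : Cmod z <= Rabs (fst z) + Rabs (snd z).
Proof.
  have p1 := Rabs_pos (fst z); have p2 := Rabs_pos (snd z).
  rewrite /Cmod -(sqrt_pow2 (Rabs (fst z) + Rabs (snd z))); last lra.
  apply: sqrt_le_1_alt. rewrite -(pow2_abs (fst z)) -(pow2_abs (snd z)). nra.
Qed.

Lemma fst_le_Cmod (z w : C) : Rabs (fst z - fst w) <= Cmod (Cminus z w).
Proof. exact: re_le_Cmod (Cminus z w). Qed.

Lemma snd_le_Cmod (z w : C) : Rabs (snd z - snd w) <= Cmod (Cminus z w).
Proof. exact: Rle_trans (Rmax_r _ _) (Rmax_Cmod (Cminus z w)). Qed.

Lemma Rabs_mul_diff (p1 p2 s1 s2 : R) : Rabs s1 <= 1 -> 0 <= p2 ->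
  Rabs (p1 * s1 - p2 * s2) <= Rabs (p1 - p2) + p2 * Rabs (s1 - s2).
Proof.
  move=> hs hp. have -> : p1 * s1 - p2 * s2 = (p1 - p2) * s1 + p2 * (s1 - s2) by ring.
  apply: Rle_trans (Rabs_triang _ _) _. rewrite !Rabs_mult (Rabs_pos_eq p2) //.
  have := Rabs_pos (p1 - p2). nra.
Qed.

(* Local Lipschitz bound for the complex exponential, relative to the value at y;
   it is what makes L_f preserve the variation condition defining V. *)
Lemma cexp_lip (x y : C) : Rabs (fst x - fst y) <= 1 ->
  Cmod (Cminus (cexp x) (cexp y)) <= 8 * exp (fst y) * Cmod (Cminus x y).
Proof.
  move=> h. have hre := fst_le_Cmod x y; have him := snd_le_Cmod x y.
  have he := exp_lip (fst y) (fst x) h. have pe := exp_pos (fst y).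
  have hc := cos_lip (snd y) (snd x); have hs := sin_lip (snd y) (snd x).
  have hc1 : Rabs (cos (snd x)) <= 1 by apply: Rabs_le; have := COS_bound (snd x); lra.
  have hs1 : Rabs (sin (snd x)) <= 1 by apply: Rabs_le; have := SIN_bound (snd x); lra.
  have hx := Rabs_mul_diff (exp (fst x)) (exp (fst y)) _ (cos (snd y)) hc1 (Rlt_le _ _ pe).
  have hy := Rabs_mul_diff (exp (fst x)) (exp (fst y)) _ (sin (snd y)) hs1 (Rlt_le _ _ pe).
  apply: Rle_trans (Cmod_le_sum _) _. rewrite /cexp /=.
  have := Cmod_ge_0 (Cminus x y). rewrite /Rminus in hx hy hc hs hre him he |- *. nra.
Qed.

Lemma Cmod_cexp x : Cmod (cexp x) = exp (fst x).
Proof.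
  rewrite /Cmod /cexp /=.
  have -> : (exp (fst x) * cos (snd x)) ^ 2 + (exp (fst x) * sin (snd x)) ^ 2 = exp (fst x) ^ 2.
  { have := sin2_cos2 (snd x). rewrite /Rsqr. nra. }
  exact: sqrt_pow2 (Rlt_le _ _ (exp_pos _)).
Qed.

Lemma Cminus_RtoC (a b : R) : Cminus (RtoC a) (RtoC b) = RtoC (a - b).
Proof. apply: injective_projections; rewrite /=; ring. Qed.

Lemma Cminus_0 (z : C) : Cminus z (RtoC 0) = z.
Proof. apply: injective_projections; rewrite /=; ring. Qed.

Lemma Cminus_self (z : C) : Cminus z z = RtoC 0.
Proof. apply: injective_projections; rewrite /=; ring. Qed.

Lemma lub_le (E : R -> Prop) (X : R) : (forall r, E r -> r <= X) -> Rbar_le (Lub_Rbar E) X.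
Proof. move=> h. exact: (proj2 (Lub_Rbar_correct E)). Qed.

Lemma le_lub (E : R -> Prop) r : E r -> Rbar_le r (Lub_Rbar E).
Proof. exact: (proj1 (Lub_Rbar_correct E)). Qed.

Lemma Rbar_le_lt (r q : R) (x : Rbar) : Rbar_le r x -> Rbar_lt x q -> r < q.
Proof. move=> h1 h2. exact: Rbar_le_lt_trans h1 h2. Qed.

Lemma Rbar_plus_lt_r (s l : Rbar) (r e : R) :
  Rbar_le 0 s -> Rbar_le r l -> Rbar_lt (Rbar_plus s l) e -> r < e.
Proof. case: s => [s| |]; case: l => [l| |] /=; intuition lra. Qed.

Lemma Rbar_plus_lt (x y : Rbar) (a b e : R) :
  Rbar_le x a -> Rbar_le y b -> a + b < e -> Rbar_lt (Rbar_plus x y) e.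
Proof. case: x => [x| |]; case: y => [y| |] /=; intuition lra. Qed.

Lemma pow_le_1 (x : R) n : 0 <= x <= 1 -> x ^ n <= 1.
Proof. move=> hx. rewrite -(pow1 n). apply: pow_incr; lra. Qed.

Lemma pow_decr (x : R) (m n : nat) : 0 <= x <= 1 -> (m <= n)%N -> x ^ n <= x ^ m.
Proof.
  move=> hx hmn. have -> : n = (m + (n - m))%nat by lia. rewrite pow_add.
  have := pow_le_1 x (n - m) hx. have := pow_le x m (proj1 hx). nra.
Qed.

Lemma pow2_unbounded (X : R) : exists k, X <= 2 ^ k.
Proof.
  have pow2_ge : forall n, INR n <= 2 ^ n.
  { elim=> [|n IH]; first by rewrite /=; lra.
    rewrite S_INR /=. have : 1 <= 2 ^ n by apply: pow_R1_Rle; lra. lra. }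
  have [n hn] := INR_archimed 1 X Rlt_0_1. exists n. have := pow2_ge n. lra.
Qed.

(* With e = min(eps, 1/(D+1)), D e^(q+1) <= eps^q: choice of the accuracy
   needed on f to bound the variation of L_f phi. *)
Lemma scaled_power_bound (D eps : R) (q : nat) : 0 <= D -> 0 < eps ->
  D * Rmin eps (/ (D + 1)) ^ q.+1 <= eps ^ q.
Proof.
  move=> hD heps. set e := Rmin eps (/ (D + 1)).
  have he0 : 0 <= e by apply: Rmin_glb; [lra | left; apply: Rinv_0_lt_compat; lra].
  have hDe : D * e <= 1.
  { apply: Rle_trans (Rmult_le_compat_l _ _ _ hD (Rmin_r _ _)) _.
    apply: (Rmult_le_reg_r (D + 1)); first lra.
    rewrite Rmult_assoc Rinv_l; lra. }
  have heq : e ^ q <= eps ^ q by apply: pow_incr; split; [lra | exact: Rmin_l].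
  have := pow_le e q he0. rewrite /= -Rmult_assoc. nra.
Qed.

(* For c = delta t^(m+2) the quotient c E / (t/2)^m equals delta t^2 E 2^m,
   which is >= 1 once 2^m >= 1/(delta t^2 E). *)
Lemma quotient_lower_bound (delta t E : R) (m : nat) : 0 < delta -> 0 < t -> 0 < E ->
  / (delta * t ^ 2 * E) <= 2 ^ m -> 1 <= delta * t ^ m.+2 * E / (t / 2) ^ m.
Proof.
  move=> hd ht hE hm. have hX : 0 < delta * t ^ 2 * E.
  { apply: Rmult_lt_0_compat hE. exact: Rmult_lt_0_compat hd (pow_lt _ _ ht). }
  have -> : delta * t ^ m.+2 * E / (t / 2) ^ m = delta * t ^ 2 * E * 2 ^ m.
  { rewrite /Rdiv Rpow_mult_distr pow_inv. have -> : m.+2 = (2 + m)%nat by lia.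
    rewrite pow_add. field. split; apply: pow_nonzero; lra. }
  rewrite -(Rinv_r (delta * t ^ 2 * E)); last lra.
  exact: Rmult_le_compat_l (Rlt_le _ _ hX) hm.
Qed.

Lemma list_upper_bound {X : Type} {P : X -> nat -> Prop} {l : list X} :
  (forall O, In O l -> exists j, P O j) ->
  exists B, forall O, In O l -> exists j, (j <= B)%N /\ P O j.
Proof.
  elim: l => [|a l IH] h; first by exists 0%N.
  have [B hB] := IH (fun O hO => h O (or_intror hO)).
  have [ja hja] := h a (or_introl erefl).
  exists (maxn B ja) => O [<- | hin]; first by exists ja; split; [lia | done].
  have [j [hj hPj]] := hB O hin. exists j. split; [lia | done].
Qed.

Lemma list_min_spec {l : list R} : (forall th, In th l -> 0 < th) ->
  (0 < fold_right Rmin (/ 2) l <= / 2) /\ forall th, In th l -> fold_right Rmin (/ 2) l <= th.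
Proof.
  elim: l => [|a l IH] h /=; first by split; [lra | done].
  have [[h1 h2] h3] := IH (fun th hth => h th (or_intror hth)).
  have ha := h a (or_introl erefl). have hr := Rmin_r a (fold_right Rmin (/ 2) l).
  split; first by split; [apply: Rmin_pos; lra | lra].
  move=> th [<- | hin]; [exact: Rmin_l | exact: Rle_trans hr (h3 th hin)].
Qed.

Section Agreement.
Variable N : nat.

Definition agreeb (x y : nat -> 'I_N) (L : nat) : bool := all (fun k => x k == y k) (iota 0 L).

Lemma agreeP x y L : reflect (forall k, (k < L)%N -> x k = y k) (agreeb x y L).
Proof.
  apply: (iffP allP) => h k.
  - move=> hk. apply/eqP/h. rewrite mem_iota. lia.
  - rewrite mem_iota => /andP[_ hk]. apply/eqP/h. lia.
Qed.

Lemma agreeb_scons i j x y L : agreeb (scons i x) (scons j y) L.+1 = (i == j) && agreeb x y L.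
Proof.
  apply/agreeP/andP => [h | [/eqP -> /agreeP h] [|k] hk //=]; last exact: h.
  split; first exact/eqP/(h 0%N).
  apply/agreeP => k hk. exact: (h k.+1).
Qed.

Lemma agreeb_congr (x x' v : nat -> 'I_N) L q :
  (forall k, (k < q)%N -> x k = x' k) -> (L <= q)%N -> agreeb x v L = agreeb x' v L.
Proof.
  move=> h hL. apply/agreeP/agreeP => H k hk; [rewrite -h | rewrite h]; try apply: H; lia.
Qed.

End Agreement.

Arguments agreeb {N} x y L.
Arguments agreeP {N x y L}.
Arguments agreeb_congr {N x x'} v {L q}.

Section Variation.
Variables (N : nat) (A : 'I_N -> 'I_N -> bool).

Lemma var_ge (g : Sigma A -> C) n (z z' : Sigma A) :
  (forall k, (k < n)%N -> sq z k = sq z' k) ->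
  Rbar_le (Cmod (Cminus (g z) (g z'))) (Defs.var n g).
Proof. move=> h. apply: le_lub. by exists z, z'. Qed.

Lemma inV_agree (g : Sigma A -> C) : inV g ->
  forall eps, 0 < eps -> exists M, forall n, (M <= n)%N -> forall z z' : Sigma A,
    (forall k, (k < n)%N -> sq z k = sq z' k) -> Cmod (Cminus (g z) (g z')) < eps ^ n.
Proof.
  move=> hg eps heps. have [M hM] := hg eps heps.
  exists M => n hn z z' hzz. exact: Rbar_le_lt (var_ge g _ _ _ hzz) (hM n hn).
Qed.

Lemma inV_intro (g : Sigma A -> C) :
  (forall eps, 0 < eps -> exists M, forall n, (M <= n)%N -> forall z z' : Sigma A,
    (forall k, (k < n)%N -> sq z k = sq z' k) -> Cmod (Cminus (g z) (g z')) <= eps ^ n) ->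
  inV g.
Proof.
  move=> hg eps heps. have [M hM] := hg (eps / 2) ltac:(lra).
  exists (maxn M 1) => n hn. apply: Rbar_le_lt_trans (_ : Rbar_le _ ((eps / 2) ^ n)) _.
  - apply: lub_le => r [z [z' [hzz ->]]]. apply: hM hzz. lia.
  - rewrite /= /Rdiv Rpow_mult_distr.
    have hq : (/ 2) ^ n <= / 2 by have := pow_decr (/ 2) 1 n ltac:(lra) ltac:(lia); rewrite /=; lra.
    have := pow_lt eps n heps. nra.
Qed.

End Variation.

Arguments inV_agree {N A g}.
Arguments inV_intro {N A g}.

Section AdmissibleWords.
Variables (N : nat) (A : 'I_N -> 'I_N -> bool) (hA : aperiodic A).

Lemma row_nonzero i : exists j, A i j.
Proof.
  have [M [hM hpath]] := hA. have [w [w0 [_ hw]]] := hpath i i.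
  exists (w 1%N). rewrite -w0. apply: hw. lia.
Qed.

Definition succ i : 'I_N := odflt i [pick j | A i j].

Lemma succ_adm i : A i (succ i).
Proof.
  rewrite /succ. case: pickP => [j hj // | h0].
  have [j hj] := row_nonzero i. by rewrite h0 in hj.
Qed.

Lemma extend_word {x : nat -> 'I_N} {M : nat} :
  (forall k, (k < M)%N -> A (x k) (x k.+1)) ->
  exists y : Sigma A, forall k, (k <= M)%N -> sq y k = x k.
Proof.
  move=> hx. pose y k := if (k <= M)%N then x k else iter (k - M) succ (x M).
  have hy : forall k, A (y k) (y k.+1).
  { move=> k. rewrite /y. case: (leqP k.+1 M) => h1.
    - rewrite (leq_trans (leqnSn k) h1). exact: hx.
    - case: (leqP k M) => h2.
      + have -> : k = M by lia. rewrite subSnn /=. exact: succ_adm.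
      + have -> : (k.+1 - M = (k - M).+1)%N by lia. rewrite iterS. exact: succ_adm. }
  exists (exist _ y hy) => k hk. by rewrite /sq /= /y hk.
Qed.

Lemma extend_prefix_path {b : Sigma A} {P M : nat} {w : nat -> 'I_N} :
  w 0%N = sq b P.+1 -> (forall k, (k < M)%N -> A (w k) (w k.+1)) ->
  exists y : Sigma A, (forall j, (j <= P)%N -> sq y j = sq b j.+1) /\ sq y (P + M)%N = w M.
Proof.
  move=> hw0 hw. pose x j := if (j <= P)%N then sq b j.+1 else w (j - P)%N.
  have hx : forall k, (k < P + M)%N -> A (x k) (x k.+1).
  { move=> k hk. rewrite /x. case: (leqP k.+1 P) => h1.
    - rewrite (leq_trans (leqnSn k) h1). exact: (proj2_sig b k.+1).
    - case: (leqP k P) => h2.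
      + have e : k = P by lia. rewrite e subSnn -hw0. have := hw 0%N. apply; lia.
      + have -> : (k.+1 - P = (k - P).+1)%N by lia. apply: hw. lia. }
  have [y hy] := extend_word hx. exists y. split.
  - move=> j hj. rewrite hy /x ?hj //. lia.
  - rewrite hy // /x. case: (leqP (P + M) P) => hPM.
    + have eM : M = 0%N by lia. by rewrite eM addn0 -hw0.
    + by rewrite addKn.
Qed.

Lemma first_diff_after (u u' : Sigma A) (P : nat) :
  (forall j, (j <= P)%N -> sq u j = sq u' j) -> (exists j, sq u j != sq u' j) ->
  exists m, (P < m)%N /\ first_diff u u' m.
Proof.
  move=> hlo hex. case: (ex_minnP hex) => m hm hmin. exists m. split.
  - case: (leqP m P) => // hle. by rewrite hlo in hm; [rewrite eqxx in hm|].
  - split; first exact/eqP. move=> j hj. apply/eqP.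
    case E: (sq u j == sq u' j) => //. have := hmin j; rewrite E => /(_ isT). lia.
Qed.

(* Since N >= 2 and A^M > 0, every long prefix of the shifted point b is shared by
   two points u, u' that first differ at some m > P. *)
Lemma two_points (hN : (2 <= N)%N) (b : Sigma A) (P : nat) :
  exists (u u' : Sigma A) (m : nat), (P < m)%N /\ first_diff u u' m /\
    forall j, (j <= P)%N -> sq u j = sq b j.+1.
Proof.
  have [M [_ hpath]] := hA.
  have [w1 [w10 [w1M w1a]]] := hpath (sq b P.+1) (Ordinal (ltnW hN)).
  have [w2 [w20 [w2M w2a]]] := hpath (sq b P.+1) (Ordinal hN).
  have [u [hu hu1]] := extend_prefix_path w10 w1a.
  have [u' [hu' hu2]] := extend_prefix_path w20 w2a.
  have [m [hPm hm]] : exists m, (P < m)%N /\ first_diff u u' m.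
  { apply: first_diff_after => [j hj | ]; first by rewrite hu // hu'.
    exists (P + M)%N. by rewrite hu1 hu2 w1M w2M. }
  by exists u, u', m.
Qed.

Lemma Sigma_inhabited (hN : (2 <= N)%N) : inhabited (Sigma A).
Proof. have [b _] := @extend_word (fun _ => Ordinal (ltnW hN)) 0 ltac:(lia). by exists. Qed.

End AdmissibleWords.

Arguments two_points {N A} hA hN b P.
Arguments Sigma_inhabited {N A} hA hN.

Section Indicator.
Variables (N : nat) (A : 'I_N -> 'I_N -> bool).

Definition indicator (v : nat -> 'I_N) (L : nat) (c : R) : Sigma A -> C :=
  fun x => RtoC (if agreeb (sq x) v L then c else 0).

(* Cylinder indicators are locally constant, hence in V. *)
Lemma indicator_inV v L c : inV (indicator v L c).
Proof.
  apply: inV_intro => eps heps. exists L => n hn z z' hzz.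
  rewrite /indicator (agreeb_congr v hzz hn) Cminus_self Cmod_0.
  exact: pow_le (Rlt_le _ _ heps).
Qed.

(* Sup norm and Lipschitz constant of a cylinder indicator: the only jumps occur
   between points first differing before L. *)
Lemma indicator_supnorm v L c : 0 <= c -> Rbar_le (supnorm (indicator v L c)) c.
Proof.
  move=> hc. apply: lub_le => r [w ->]. rewrite /indicator Cmod_R.
  case: agreeb; rewrite ?Rabs_R0 ?Rabs_pos_eq; lra.
Qed.

Lemma indicator_lipconst v L c th : 0 <= c -> 0 < th <= 1 ->
  Rbar_le (lipconst th (indicator v L c)) (c / th ^ L).
Proof.
  move=> hc hth. apply: lub_le => r [w [w' [n [[_ hagr] ->]]]].
  have hthn : 0 < th ^ n by apply: pow_lt; lra.
  rewrite /indicator. case: (leqP L n) => hn.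
  - rewrite (agreeb_congr v hagr hn) Cminus_self Cmod_0 /Rdiv Rmult_0_l.
    apply: Rmult_le_pos hc (Rlt_le _ _ (Rinv_0_lt_compat _ (pow_lt _ _ _))); lra.
  - have hpow : th ^ L <= th ^ n by apply: pow_decr; [lra | lia].
    apply: Rle_trans (_ : c / th ^ n <= _).
    + apply: Rmult_le_compat_r; first exact: Rlt_le (Rinv_0_lt_compat _ hthn).
      rewrite Cminus_RtoC Cmod_R. by case: agreeb; case: agreeb; apply: Rabs_le; lra.
    + apply: Rmult_le_compat_l hc _. apply: Rinv_le_contravar _ hpow. apply: pow_lt; lra.
Qed.

Lemma indicator_norm_small v L (delta t th : R) :
  0 < delta -> 0 < t <= th -> th <= 1 ->
  Rbar_lt (norm_theta th (indicator v L (delta * t ^ L))) (3 * delta).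
Proof.
  move=> hd ht hth.
  have htL : 0 < t ^ L by apply: pow_lt; lra.
  have hle : t ^ L <= th ^ L by apply: pow_incr; lra.
  have hc1 : delta * t ^ L <= delta.
  { have := pow_le_1 t L ltac:(lra). nra. }
  apply: (Rbar_plus_lt _ _ delta delta); last lra.
  - apply: Rbar_le_trans (indicator_supnorm _ _ _ _) _; first nra. exact: hc1.
  - apply: Rbar_le_trans (indicator_lipconst _ _ _ _ _ _) _; [nra | lra |].
    rewrite /= /Rdiv Rmult_assoc. rewrite -[X in _ <= X]Rmult_1_r.
    apply: Rmult_le_compat_l; first lra.
    apply: (Rmult_le_reg_r (th ^ L)); first lra.
    rewrite Rmult_assoc Rinv_l; lra.
Qed.

Lemma indicator_in_nbhd (U : (Sigma A -> C) -> Prop) (thetas : list R) (eps t : R) v L :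
  0 < eps -> 0 < t -> (forall th, In th thetas -> t <= th <= 1) ->
  (forall phi, inV phi -> (forall th, In th thetas ->
     Rbar_lt (norm_theta th (fsub phi (fun _ => RtoC 0))) eps) -> U phi) ->
  U (indicator v L (eps / 3 * t ^ L)).
Proof.
  move=> heps ht hth hU. apply: hU; first exact: indicator_inV.
  move=> th hin. have [hth1 hth2] := hth th hin.
  have -> : fsub (indicator v L (eps / 3 * t ^ L)) (fun _ => RtoC 0) = indicator v L (eps / 3 * t ^ L).
  { apply: functional_extensionality => w. exact: Cminus_0. }
  have {2}-> : eps = 3 * (eps / 3) by field.
  apply: indicator_norm_small; lra.
Qed.

End Indicator.

Arguments indicator {N} A v L c.

HB.instance Definition _ :=
  Monoid.isComLaw.Build C (RtoC 0) Cplus Cplus_assoc Cplus_comm Cplus_0_l.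

Section Transfer.
Variables (N : nat) (A : 'I_N -> 'I_N -> bool).

Lemma pre_spec i (w : Sigma A) :
  match Defs.pre i w with Some w' => sq w' = scons i (sq w) | None => A i (sq w 0) = false end.
Proof. rewrite /Defs.pre. move: (@erefl _ (A i (sq w 0))). by case: {2 3}(A i (sq w 0)). Qed.

(* L_f of the indicator of [i0 u_0 ... u_(n-1)]: only the branch i0 contributes,
   giving c e^(f(i0.w)) on the cylinder [u_0 ... u_(n-1)] and 0 off it. *)
Lemma transfer_indicator (f : Sigma A -> C) (i0 : 'I_N) (u : Sigma A) (n : nat) (c : R)
  (w : Sigma A) : (0 < n)%N -> A i0 (sq u 0) ->
  (agreeb (sq w) (sq u) n -> exists wb, sq wb = scons i0 (sq w) /\
     transfer f (indicator A (scons i0 (sq u)) n.+1 c) w = Cmult (cexp (f wb)) (RtoC c)) /\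
  (~~ agreeb (sq w) (sq u) n -> transfer f (indicator A (scons i0 (sq u)) n.+1 c) w = RtoC 0).
Proof.
  move=> hn hA0. rewrite /transfer (bigD1 i0) //= big1 => [|i hi].
  - have := pre_spec i0 w. case: (Defs.pre i0 w) => [w'|] e.
    + rewrite /indicator e agreeb_scons eqxx /=. split.
      * move=> ->. exists w'. split => //. apply: injective_projections; rewrite /=; ring.
      * move/negbTE => ->. apply: injective_projections; rewrite /=; ring.
    + split=> [/agreeP h | _]; last by apply: injective_projections; rewrite /=; ring.
      by rewrite (h 0%N hn) hA0 in e.
  - have := pre_spec i w. case: (Defs.pre i w) => [w'|] // e.
    rewrite /indicator e agreeb_scons (negbTE hi) /=.
    apply: injective_projections; rewrite /=; ring.
Qed.

Lemma transfer_indicator_inV (f : Sigma A -> C) (i0 : 'I_N) (u : Sigma A) (n : nat)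
  (c K : R) : inV f -> (0 < n)%N -> A i0 (sq u 0) -> 0 <= c ->
  (forall z : Sigma A, agreeb (sq z) (scons i0 (sq u)) n.+1 -> fst (f z) <= K) ->
  inV (transfer f (indicator A (scons i0 (sq u)) n.+1 c)).
Proof.
  move=> hf hn hA0 hc hK. apply: inV_intro => eps heps.
  set D := 8 * exp K * c.
  have hD : 0 <= D by rewrite /D; have := exp_pos K; nra.
  set e := Rmin eps (/ (D + 1)).
  have he : 0 < e by apply: Rmin_pos; [lra | apply: Rinv_0_lt_compat; lra].
  have he1 : e <= 1.
  { apply: Rle_trans (Rmin_r _ _) _. rewrite -Rinv_1. apply: Rinv_le_contravar; lra. }
  have [Mf hMf] := inV_agree hf e he.
  exists (maxn Mf n) => q hq w w' hww.
  have tv := fun z => transfer_indicator f i0 u n c z hn hA0.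
  have hcong : agreeb (sq w) (sq u) n = agreeb (sq w') (sq u) n.
  { apply: agreeb_congr hww _. lia. }
  case E: (agreeb (sq w) (sq u) n); last first.
  - have E' : ~~ agreeb (sq w') (sq u) n by rewrite -hcong E.
    rewrite (tv w).2 ?E // (tv w').2 // Cminus_self Cmod_0.
    exact: pow_le (Rlt_le _ _ heps).
  - have E' : agreeb (sq w') (sq u) n by rewrite -hcong E.
    have [wb [hwb ->]] := (tv w).1 E. have [wb' [hwb' ->]] := (tv w').1 E'.
    have hff : Cmod (Cminus (f wb) (f wb')) < e ^ q.+1.
    { apply: hMf; first lia. move=> [|k] hk; rewrite hwb hwb' //=. apply: hww. lia. }
    have hK' : fst (f wb') <= K by apply: hK; rewrite hwb' agreeb_scons eqxx.
    have hlip : Cmod (Cminus (cexp (f wb)) (cexp (f wb'))) <= 8 * exp K * Cmod (Cminus (f wb) (f wb')).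
    { apply: Rle_trans (cexp_lip _ _ _) _.
      - apply: Rle_trans (fst_le_Cmod _ _) _. have := pow_le_1 e q.+1 (conj (Rlt_le _ _ he) he1). lra.
      - apply: Rmult_le_compat_r (Cmod_ge_0 _) _. have := exp_mono _ _ hK'. lra. }
    have -> : Cminus (Cmult (cexp (f wb)) (RtoC c)) (Cmult (cexp (f wb')) (RtoC c))
              = Cmult (Cminus (cexp (f wb)) (cexp (f wb'))) (RtoC c).
    { apply: injective_projections; rewrite /=; ring. }
    rewrite Cmod_mult Cmod_R (Rabs_pos_eq c hc).
    apply: (Rle_trans _ _ _ _ (scaled_power_bound D eps q hD heps)).
    apply: Rle_trans (Rmult_le_compat_r _ _ _ hc hlip) _. rewrite -/e /D.
    have -> : 8 * exp K * Cmod (Cminus (f wb) (f wb')) * c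
              = 8 * exp K * c * Cmod (Cminus (f wb) (f wb')) by ring.
    apply: Rmult_le_compat_l (Rlt_le _ _ hff). have := exp_pos K. nra.
Qed.

Lemma transfer_indicator_jump (f : Sigma A -> C) (i0 : 'I_N) (u u' : Sigma A) (m : nat) (c : R) :
  A i0 (sq u 0) -> first_diff u u' m ->
  exists wb : Sigma A, sq wb = scons i0 (sq u) /\
    Cmod (Cminus (transfer f (indicator A (scons i0 (sq u)) m.+2 c) u)
                 (transfer f (indicator A (scons i0 (sq u)) m.+2 c) u')) = exp (fst (f wb)) * Rabs c.
Proof.
  move=> hA0 [hne _].
  have hag : agreeb (sq u) (sq u) m.+1 by apply/agreeP.
  have hu' : ~~ agreeb (sq u') (sq u) m.+1.
  { apply/negP => /agreeP h. exact: hne (esym (h m (ltnSn m))). }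
  have [wb [hwb ->]] := (transfer_indicator f i0 u m.+1 c u isT hA0).1 hag.
  rewrite (transfer_indicator f i0 u m.+1 c u' isT hA0).2 //.
  by exists wb; rewrite Cminus_0 Cmod_mult Cmod_cexp Cmod_R.
Qed.

End Transfer.

Arguments transfer_indicator {N A} f i0 u n c w.
Arguments transfer_indicator_inV {N A} f i0 u n c K.
Arguments transfer_indicator_jump {N A} f i0 u u' m c.

Section QuotientBound.
Variables (N : nat) (A : 'I_N -> 'I_N -> bool).

Definition quotient_bounded (tp : R) (j : nat) (g : Sigma A -> C) : Prop :=
  inV g /\ exists L, L < 1 /\ forall w w' n, first_diff w w' n -> (j <= n)%N ->
     Cmod (Cminus (g w) (g w')) / tp ^ n <= L.

Lemma supnorm_ge0 (b : Sigma A) (g : Sigma A -> C) : Rbar_le 0 (supnorm g).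
Proof.
  apply: Rbar_le_trans (_ : Rbar_le 0 (Cmod (g b))) _; first exact: Cmod_ge_0.
  apply: le_lub. by exists b.
Qed.

(* O_j is open: a ball of radius (1 - L)/2 for ||.||_tp around a member stays in O_j. *)
Lemma quotient_bounded_open (b : Sigma A) tp j : 0 < tp < 1 -> openV (quotient_bounded tp j).
Proof.
  move=> htp. split=> [g [] // | psi [hpsi [L [hL hb]]]].
  split=> [g [] // |]. exists (tp :: nil), ((1 - L) / 2).
  split; first lra. split=> [th [<- | []] | g hg hn]; first lra.
  split=> //. exists (L + (1 - L) / 2). split=> [|w w' n hd hj]; first lra.
  have hlip : Cmod (Cminus (fsub g psi w) (fsub g psi w')) / tp ^ n < (1 - L) / 2.
  { apply: Rbar_plus_lt_r (supnorm_ge0 b _) _ (hn tp (or_introl erefl)).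
    apply: le_lub. by exists w, w', n. }
  have e : Cminus (g w) (g w')
         = Cplus (Cminus (fsub g psi w) (fsub g psi w')) (Cminus (psi w) (psi w')).
  { rewrite /fsub. apply: injective_projections; rewrite /=; ring. }
  have tri := Cmod_triangle (Cminus (fsub g psi w) (fsub g psi w')) (Cminus (psi w) (psi w')).
  rewrite -e in tri. have hp := hb w w' n hd hj.
  have pn : 0 < / tp ^ n by apply: Rinv_0_lt_compat; apply: pow_lt; lra.
  rewrite /Rdiv in hlip hp |- *. have := Rmult_le_compat_r _ _ _ (Rlt_le _ _ pn) tri. lra.
Qed.

(* The O_j cover V: eventually var_n g < (tp/2)^n, so the quotients drop below 1/2. *)
Lemma quotient_bounded_cover tp g : 0 < tp < 1 -> inV g -> exists j, quotient_bounded tp j g.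
Proof.
  move=> htp hg. have [M hM] := inV_agree hg (tp / 2) ltac:(lra).
  exists (maxn M 1). split=> //. exists (/ 2). split=> [|w w' n [_ ha] hj]; first lra.
  have hlt := hM n ltac:(lia) w w' ha.
  have hq : (/ 2) ^ n <= / 2 by have := pow_decr (/ 2) 1 n ltac:(lra) ltac:(lia); rewrite /=; lra.
  have pn : 0 < tp ^ n by apply: pow_lt; lra.
  rewrite /Rdiv Rpow_mult_distr in hlt.
  apply: (Rmult_le_reg_r (tp ^ n)); first done.
  rewrite /Rdiv Rmult_assoc Rinv_l; nra.
Qed.

Lemma quotient_bounded_mono {tp j B g} :
  (j <= B)%N -> quotient_bounded tp j g -> quotient_bounded tp B g.
Proof.
  move=> hjB [hg [L [hL hb]]]. split=> //. exists L. split=> // w w' n hd hn.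
  apply: hb hd _. lia.
Qed.

Lemma compact_quotient_bounded (b : Sigma A) tp (K : (Sigma A -> C) -> Prop) :
  0 < tp < 1 -> compactV K -> exists B, forall g, K g -> quotient_bounded tp B g.
Proof.
  move=> htp [hKV hcov].
  have [l [hl hlcov]] := hcov (fun O => exists j, O = quotient_bounded tp j)
    ltac:(move=> O [j ->]; exact: quotient_bounded_open b _ _ htp)
    ltac:(move=> g hg; have [j hj] := quotient_bounded_cover tp g htp (hKV g hg);
          by exists (quotient_bounded tp j); split; [exists j |]).
  have [B hB] := list_upper_bound hl.
  exists B => g hg. have [O [hin hO]] := hlcov g hg.
  have [j [hj eO]] := hB O hin. rewrite eO in hO. exact: quotient_bounded_mono hj hO.
Qed.

Lemma fsub_self_norm th (g : Sigma A -> C) e : 0 < e -> Rbar_lt (norm_theta th (fsub g g)) e.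
Proof.
  move=> he. apply: (Rbar_plus_lt _ _ 0 0); last lra.
  - apply: lub_le => r [w ->]. rewrite /fsub Cminus_self Cmod_0. lra.
  - apply: lub_le => r [w [w' [n [_ ->]]]]. rewrite /fsub !Cminus_self Cmod_0 /Rdiv. lra.
Qed.

Lemma closureV_of_mem (S : (Sigma A -> C) -> Prop) psi : inV psi -> S psi -> closureV S psi.
Proof.
  move=> hpsi hS. split=> // U [_ [ths [e [he [_ hU]]]]]. exists psi. split=> //.
  apply: hU hpsi _ => th _. exact: fsub_self_norm.
Qed.

End QuotientBound.

Arguments quotient_bounded {N} A tp j g.
Arguments compact_quotient_bounded {N A} b tp K.
Arguments closureV_of_mem {N A S psi}.

Section Witness.
Variables (N : nat) (A : 'I_N -> 'I_N -> bool) (hN : (2 <= N)%N) (hA : aperiodic A).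
Variables (f : Sigma A -> C) (hf : inV f).

Lemma large_quotient_in_closure (t eps : R) (thetas : list R) (U : (Sigma A -> C) -> Prop)
  (ht : 0 < t < 1) (heps : 0 < eps)
  (hth : forall th, In th thetas -> t <= th <= 1)
  (hU : forall phi, inV phi -> (forall th, In th thetas ->
          Rbar_lt (norm_theta th (fsub phi (fun _ => RtoC 0))) eps) -> U phi)
  (k : nat) :
  exists psi, closureV (image_of (transfer f) U) psi /\
    exists w w' n, first_diff w w' n /\ (k <= n)%N /\
       1 <= Cmod (Cminus (psi w) (psi w')) / (t / 2) ^ n.
Proof.
  have [b] := Sigma_inhabited hA hN.
  have [Mf hMf] := inV_agree hf 1 Rlt_0_1.
  set delta := eps / 3. have hd : 0 < delta by rewrite /delta; lra.
  set E0 := exp (fst (f b) - 1).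
  have [k0 hk0] := pow2_unbounded (/ (delta * t ^ 2 * E0)).
  have [u [u' [m [hPm [hfd hub]]]]] := two_points hA hN b (maxn (maxn k Mf) k0).
  set i0 := sq b 0.
  have hA0 : A i0 (sq u 0) by rewrite hub //; exact: (proj2_sig b 0%N).
  (* the cylinder [i0 u_0 ... u_m] lies in the Mf-cylinder of b, where f is within 1 of f b *)
  have hnear : forall z, agreeb (sq z) (scons i0 (sq u)) m.+2 -> Rabs (fst (f z) - fst (f b)) < 1.
  { move=> z /agreeP hz. apply: Rle_lt_trans (fst_le_Cmod _ _) _.
    have hzb : forall j, (j < Mf)%N -> sq z j = sq b j.
    { move=> j hj. rewrite hz; last lia. case: j hj => [|j] hj //=. apply: hub. lia. }
    by have := hMf Mf (leqnn _) z b hzb; rewrite pow1. }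
  set c := delta * t ^ m.+2.
  have hc : 0 < c by apply: Rmult_lt_0_compat hd (pow_lt _ _ _); lra.
  set phi0 := indicator A (scons i0 (sq u)) m.+2 c.
  have hphi0 : U phi0 by apply: indicator_in_nbhd hth hU; lra.
  have hpsi : inV (transfer f phi0).
  { apply: (transfer_indicator_inV f i0 u m.+1 c (fst (f b) + 1)) => //; first lra.
    move=> z hz. have := Rabs_le_between (fst (f z) - fst (f b)) 1. have := hnear z hz. lra. }
  exists (transfer f phi0). split.
  { apply: closureV_of_mem hpsi _. by exists phi0. }
  exists u, u', m. split=> //. split; first lia.
  have [wb [hwb ->]] := transfer_indicator_jump f i0 u u' m c hA0 hfd.
  rewrite Rabs_pos_eq; last lra.
  have hE0 : E0 <= exp (fst (f wb)).
  { apply: exp_mono. have hz : agreeb (sq wb) (scons i0 (sq u)) m.+2.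
    { by rewrite hwb agreeb_scons eqxx; apply/agreeP. }
    have := Rabs_le_between (fst (f wb) - fst (f b)) 1. have := hnear wb hz. lra. }
  apply: Rle_trans (quotient_lower_bound delta t E0 m hd (proj1 ht) (exp_pos _) _) _.
  - apply: Rle_trans hk0 _. apply: Rle_pow; [lra | lia].
  - rewrite /c /Rdiv. apply: Rmult_le_compat_r.
    + left. apply: Rinv_0_lt_compat. apply: pow_lt. lra.
    + rewrite [X in _ <= X]Rmult_comm. apply: Rmult_le_compat_l hE0. have := pow_lt t m.+2 (proj1 ht). nra.
Qed.

End Witness.

Arguments large_quotient_in_closure {N A} hN hA f hf t eps thetas U.

Theorem theoremA1 (N : nat) (A : 'I_N -> 'I_N -> bool)
  (hN : (2 <= N)%N) (hA : aperiodic A)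
  (f : Sigma A -> C) (hf : inV f) :
  forall U : (Sigma A -> C) -> Prop,
    nbhsV (fun _ => RtoC 0) U ->
    ~ compactV (closureV (image_of (transfer f) U)).
Proof.
  move=> U [_ [thetas [eps [heps [hth hU]]]]] hK.
  have [b] := Sigma_inhabited hA hN.
  have [[ht1 ht2] ht3] := list_min_spec (fun th hin => proj1 (hth th hin)).
  set t := fold_right Rmin (/ 2) thetas in ht1 ht2 ht3.
  have [B hB] := compact_quotient_bounded b (t / 2) _ ltac:(lra) hK.
  have hth' : forall th, In th thetas -> t <= th <= 1.
  { move=> th hin. split; [exact: ht3 | have := hth th hin; lra]. }
  have [psi [hpsi [w [w' [n [hfd [hn hlarge]]]]]]] :=
    large_quotient_in_closure hN hA f hf t eps thetas U ltac:(lra) heps hth' hU B.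
  have [_ [L [hL hbound]]] := hB psi hpsi.
  have := hbound w w' n hfd hn. lra.
Qed.
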